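(* Let $W,V$ be subspaces of $\mathbb{R}^n$ with $\mathbb{R}^n=W\oplus V^\perp$, and let $\mu$ and $\nu$ be probabilistic frames for $W$ and $V$ respectively. Then $\mu$ and $\nu$ perform probabilistic consistent reconstruction if and only if $\nu$ is an oblique dual probabilistic frame of $\mu$ on $V$.
   Context: $\mathcal{P}_2(W)$ denotes Borel probability measures on $\mathbb{R}^n$ concentrated on $W$ with finite second moment. $\mu\in\mathcal{P}_2(W)$ is a probabilistic frame for $W$ if there exist $0<A\le B<\infty$ with $A\|\mathbf{x}\|^2\le\int_W|\langle\mathbf{x},\mathbf{y}\rangle|^2d\mu(\mathbf{y})\le B\|\mathbf{x}\|^2$ for all $\mathbf{x}\in W$. $\Gamma(\mu,\nu)$ is the set of Borel probability measures on $W\times V$ with marginals $\mu$ and $\nu$. $\boldsymbol{\pi}_{WV^\perp}$ is the oblique projection of $\mathbb{R}^n$ onto $W$ along $V^\perp$. $\nu\in\mathcal{P}_2(V)$ is an oblique dual probabilistic frame of $\mu\in\mathcal{P}_2(W)$ on $V$ if there exists $\gamma\in\Gamma(\mu,\nu)$ with $\boldsymbol{\pi}_{WV^\perp}=\int_{W\times V}\mathbf{x}\mathbf{y}^t\,d\gamma(\mathbf{x},\mathbf{y})$. $\mu$ and $\nu$ perform probabilistic consistent reconstruction if there exists $\gamma\in\Gamma(\mu,\nu)$ such that for every $\mathbf{f}\in\mathbb{R}^n$, $\langle\mathbf{f},\mathbf{z}\rangle=\langle\hat{\mathbf{f}},\mathbf{z}\rangle$ for $\nu$-almost all $\mathbf{z}\in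 V$, where $\hat{\mathbf{f}}=\int_{W\times V}\mathbf{x}\langle\mathbf{y},\mathbf{f}\rangle\,d\gamma(\mathbf{x},\mathbf{y})$. *)

From HB Require Import structures.
From mathcomp Require Import all_boot all_order all_algebra.
From mathcomp Require Import all_classical all_reals all_analysis.
Set Implicit Arguments. Unset Strict Implicit. Unset Printing Implicit Defensive.
Import Order.TTheory GRing.Theory Num.Theory.
Local Open Scope classical_set_scope.
Local Open Scope ring_scope.

(* Points of R^n are n-tuples of reals, with the product (= Borel) sigma-algebra.
   Subspaces of R^n are given as row spaces of n x n matrices (mxalgebra). *)
Section Frames.
Variables (R : realType) (n : nat).

Definition vec := n.-tuple R.

Definition rv (x : vec) : 'rV[R]_n := \row_i tnth x i.

Definition dotv (x y : vec) : R := \sum_(i < n) tnth x i * tnth y i.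
Definition sqnorm (x : vec) : R := dotv x x.

Definition subsp (W : 'M[R]_n) : set vec := [set x | (rv x <= W)%MS].

Definition perp (V : 'M[R]_n) : 'M[R]_n := kermx V^T.

Definition direct_sum_perp (W V : 'M[R]_n) : Prop :=
  mxdirect (W + perp V)%MS /\ (W + perp V == 1%:M)%MS.

(* oblique projection onto W along V^perp, as a matrix acting on column
   vectors (proj_mx acts on row vectors by right multiplication) *)
Definition obl_proj (W V : 'M[R]_n) : 'M[R]_n := (proj_mx W (perp V))^T.

Definition in_P2 (W : 'M[R]_n) (mu : probability vec R) : Prop :=
  (exists A, measurable A /\ A `<=` subsp W /\ mu A = 1%E) /\
  mu.-integrable setT (fun y => (sqnorm y)%:E).

Definition prob_frame (W : 'M[R]_n) (mu : probability vec R) : Prop :=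
  in_P2 W mu /\
  exists A B : R, 0 < A /\ A <= B /\
    forall x, subsp W x ->
      ((A * sqnorm x)%:E <= \int[mu]_y ((dotv x y) ^+ 2)%:E)%E /\
      (\int[mu]_y ((dotv x y) ^+ 2)%:E <= (B * sqnorm x)%:E)%E.

Definition coupling (mu nu : probability vec R)
  (g : probability (vec * vec)%type R) : Prop :=
  (forall A, measurable A -> g (fst @^-1` A) = mu A) /\
  (forall A, measurable A -> g (snd @^-1` A) = nu A).

Definition oblique_dual (W V : 'M[R]_n) (mu nu : probability vec R) : Prop :=
  exists g : probability (vec * vec)%type R, coupling mu nu g /\
    forall i j : 'I_n,
      Rintegral g setT (fun z => tnth z.1 i * tnth z.2 j) = obl_proj W V i j.

Definition fhat (g : probability (vec * vec)%type R) (f : vec) : vec :=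
  [tuple Rintegral g setT (fun z => tnth z.1 i * dotv z.2 f) | i < n].

Definition consistent_reconstruction (mu nu : probability vec R) : Prop :=
  exists g : probability (vec * vec)%type R, coupling mu nu g /\
    forall f : vec, {ae nu, forall z, dotv f z = dotv (fhat g f) z}.

End Frames.

(* For a coupling γ of μ and ν, let Γ = ∫ x yᵀ dγ be its cross-moment matrix.
   Then f̂ = Γ f, and Γ f ∈ W because μ is concentrated on W. Since ν is
   concentrated on V and the lower frame bound rules out a nonzero vector of V
   orthogonal to ν-almost every point, ⟨f, z⟩ = ⟨f̂, z⟩ ν-a.e. holds exactly
   when f - Γ f ∈ V^⊥. Hence consistent reconstruction says Γ f ∈ W and
   f - Γ f ∈ V^⊥ for all f, which by ℝⁿ = W ⊕ V^⊥ means Γ = π_{WV^⊥}. *)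

From HB Require Import structures.
From mathcomp Require Import all_boot all_order all_algebra.
From mathcomp Require Import all_classical all_reals all_analysis.
From mathcomp Require Import measurable_realfun.
From mathcomp Require Import ring lra.
Set Implicit Arguments. Unset Strict Implicit. Unset Printing Implicit Defensive.
Import Order.TTheory GRing.Theory Num.Theory.
Local Open Scope classical_set_scope.
Local Open Scope ring_scope.

Section Integrals.
Context d (T : measurableType d) (R : realType) (m : {measure set T -> \bar R}).

Lemma integrableZl_EFin (r : R) (f : T -> R) :
  m.-integrable setT (EFin \o f) -> m.-integrable setT (EFin \o (fun x => r * f x)).
Proof. by move=> /(integrableZl measurableT r); apply: eq_integrable. Qed.

Lemma Rintegral_sum I (s : seq I) (f : I -> T -> R) :
  (forall k, m.-integrable setT (EFin \o f k)) ->
  Rintegral m setT (fun x => \sum_(k <- s) f k x) = \sum_(k <- s) Rintegral m setT (f k).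
Proof.
move=> intf; elim: s => [|a s IHs].
  by under eq_Rintegral do rewrite big_nil; rewrite big_nil Rintegral_cst// mul0r.
under eq_Rintegral do rewrite big_cons.
have ints : m.-integrable setT (EFin \o fun x => \sum_(k <- s) f k x).
  have := @integrable_sum _ _ _ m _ measurableT _ s xpredT _ (fun k _ => intf k).
  by apply: eq_integrable => // x _ /=; rewrite sumEFin.
by rewrite big_cons RintegralD// IHs.
Qed.

Lemma integral_ae0 (h : T -> R) : measurable_fun setT h ->
  {ae m, forall x, h x = 0} -> (\int[m]_x (h x)%:E = 0)%E.
Proof.
move=> mh h0; rewrite (@ae_eq_integral _ _ _ m setT (cst 0%E)) //.
- by rewrite integral0.
- exact/measurable_EFinP.
- by apply: filterS h0 => x /= ->.
Qed.

Lemma Rintegral_ae0 (h : T -> R) : measurable_fun setT h ->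
  {ae m, forall x, h x = 0} -> Rintegral m setT h = 0.
Proof. by move=> mh h0; rewrite /Rintegral integral_ae0. Qed.

End Integrals.

Lemma integrable_comp_pushforward d d' (X : measurableType d) (Y : measurableType d')
    (R : realType) (phi : X -> Y) (g : {measure set X -> \bar R})
    (mu : {measure set Y -> \bar R}) (f : Y -> \bar R) :
  measurable_fun setT phi -> (forall A, measurable A -> g (phi @^-1` A) = mu A) ->
  measurable_fun setT f -> mu.-integrable setT f -> g.-integrable setT (f \o phi).
Proof.
move=> mphi gmu mf /integrableP[_ finf]; apply/integrableP; split.
  exact: measurableT_comp.
rewrite (_ : \int[g]_(x in setT) _ = \int[g]_(x in phi @^-1` setT) ((abse \o f) \o phi) x)%E //.
rewrite -ge0_integral_pushforward//; last 2 first.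
- exact: measurableT_comp.
- by move=> y _; exact: abse_ge0.
by rewrite (eq_measure_integral mu)// => A mA _; apply: gmu.
Qed.

Section Vectors.
Variables (R : realType) (n : nat).
Local Notation vec := (vec R n).

Definition vec_of_row (u : 'rV[R]_n) : vec := [tuple u 0 i | i < n].

Lemma rv_vec_of_row u : rv (vec_of_row u) = u.
Proof. by apply/rowP => i; rewrite !mxE tnth_mktuple. Qed.

Lemma dotv_mx (x y : vec) : dotv x y = (rv x *m (rv y)^T) 0 0.
Proof. by rewrite !mxE; apply: eq_bigr => i _; rewrite !mxE. Qed.

Lemma measurable_dotv (x : vec) : measurable_fun setT (dotv x).
Proof. by apply: measurable_sum => i; apply: measurable_funM => //; apply: measurable_tnth. Qed.

Lemma measurable_sqnorm : measurable_fun setT (@sqnorm R n).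
Proof. by apply: measurable_sum => i; apply: measurable_funM; apply: measurable_tnth. Qed.

Lemma sqnorm_ge0 (x : vec) : 0 <= sqnorm x.
Proof. by apply: sumr_ge0 => i _; rewrite -expr2 sqr_ge0. Qed.

Lemma sqr_tnth_le_sqnorm (x : vec) i : tnth x i ^+ 2 <= sqnorm x.
Proof.
rewrite /sqnorm /dotv (bigD1 i)//= expr2 lerDl.
by apply: sumr_ge0 => k _; rewrite -expr2 sqr_ge0.
Qed.

Lemma row_mul_tr_eq0 (u : 'rV[R]_n) : u *m u^T = 0 -> u = 0.
Proof.
move=> /matrixP /(_ 0 0); rewrite !mxE => uu0.
have sum_sqr0 : \sum_(i < n) u 0 i ^+ 2 = 0.
  by rewrite -[RHS]uu0; apply: eq_bigr => i _; rewrite mxE expr2.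
apply/rowP => i; rewrite mxE; apply/eqP; rewrite -sqrf_eq0; apply/eqP.
by apply: (psumr_eq0P _ sum_sqr0) => // k _; apply: sqr_ge0.
Qed.

Lemma sqnorm_eq0 (x : vec) : sqnorm x = 0 -> rv x = 0.
Proof.
move=> x0; apply: row_mul_tr_eq0; apply/rowP => i.
by rewrite ord1 -dotv_mx -/(sqnorm x) x0 mxE.
Qed.

Lemma mul_perp_tr (V : 'M[R]_n) m (u : 'rV[R]_n) (A : 'M[R]_(m, n)) :
  (u <= perp V)%MS -> (A <= V)%MS -> u *m A^T = 0.
Proof. by move=> /sub_kermxP uV0 /submxP[D ->]; rewrite trmx_mul mulmxA uV0 mul0mx. Qed.

Lemma capmx_perp (V : 'M[R]_n) : (V :&: perp V = 0)%MS.
Proof.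
apply/eqP/rowV0P => u; rewrite sub_capmx => /andP[uV uVp].
exact/row_mul_tr_eq0/(mul_perp_tr uVp).
Qed.

Lemma addsmx_perp_full (V : 'M[R]_n) : (1%:M <= V + perp V)%MS.
Proof.
rewrite sub1mx /row_full.
have := mxrank_sum_cap V (perp V); rewrite capmx_perp mxrank0 addn0 => ->.
by rewrite mxrank_ker mxrank_tr subnKC // rank_leq_col.
Qed.

End Vectors.

Section Frames.
Variables (R : realType) (n : nat).
Local Notation vec := (vec R n).

Lemma in_P2_ae_subsp (W : 'M[R]_n) (mu : probability vec R) :
  in_P2 W mu -> {ae mu, forall x, subsp W x}.
Proof.
move=> [[A [mA [AW A1]]] _]; exists (~` A); split.
- exact: measurableC.
- by rewrite probability_setC// A1 subee.
- by move=> x /= + /AW.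
Qed.

Lemma ae_coupling_fst (mu nu : probability vec R) g (P : vec -> Prop) :
  coupling mu nu g -> {ae mu, forall x, P x} -> {ae g, forall z, P z.1}.
Proof.
move=> [g1 _] [N [mN N0 PN]]; exists (fst @^-1` N); split => //.
- by rewrite -[X in measurable X]setTI; apply: measurable_fst.
- by rewrite g1.
- by move=> z /= /PN.
Qed.

Lemma mulmx_rv_trB (a b z : vec) :
  ((rv a - rv b) *m (rv z)^T) 0 0 = dotv a z - dotv b z.
Proof. by rewrite !dotv_mx mulmxBl [LHS]mxE [X in _ + X]mxE. Qed.

Lemma frame_ae_orth_eq0 (V : 'M[R]_n) (nu : probability vec R) (x : vec) :
  prob_frame V nu -> subsp V x -> {ae nu, forall z, dotv x z = 0} -> rv x = 0.
Proof.
move=> [_ [A [B [A_gt0 [_ frame]]]]] xV x0.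
have int0 : (\int[nu]_z ((dotv x z) ^+ 2)%:E = 0)%E.
  apply: integral_ae0; first by apply: measurable_funX; apply: measurable_dotv.
  by apply: filterS x0 => z ->; rewrite expr0n.
have := (frame x xV).1; rewrite int0 lee_fin pmulr_rle0// => x_le0.
by apply: sqnorm_eq0; apply/eqP; rewrite eq_le x_le0 sqnorm_ge0.
Qed.

Lemma frame_ae_dotv_eqP (V : 'M[R]_n) (nu : probability vec R) (a b : vec) :
  prob_frame V nu ->
  {ae nu, forall z, dotv a z = dotv b z} <-> (rv a - rv b <= perp V)%MS.
Proof.
move=> nuV; have aeV := in_P2_ae_subsp nuV.1.
split => [ab_eq|abV]; last first.
  apply: filterS aeV => z zV; apply/eqP; rewrite -subr_eq0 -mulmx_rv_trB.
  by rewrite (mul_perp_tr abV zV) mxE.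
(* The component p of w in V pairs with every z in V as w does. *)
set w := rv a - rv b; set p := w *m proj_mx V (perp V).
have pV : (p <= V)%MS by apply: proj_mx_sub.
have wpV : (w - p <= perp V)%MS.
  by apply: proj_mx_compl_sub; apply: submx_trans (addsmx_perp_full V); apply: submx1.
suff p0 : rv (vec_of_row p) = 0 by move: wpV; rewrite -(rv_vec_of_row p) p0 subr0.
apply: (frame_ae_orth_eq0 nuV); first by rewrite /subsp /= rv_vec_of_row.
apply: filterS2 ab_eq aeV => z abz zV.
rewrite dotv_mx rv_vec_of_row -[p](subKr w) mulmxBl (mul_perp_tr wpV zV).
by rewrite subr0 mulmx_rv_trB abz subrr.
Qed.

End Frames.

Section CrossMoment.
Variables (R : realType) (n : nat) (mu nu : probability (vec R n) R).
Variable g : probability (vec R n * vec R n)%type R.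
Hypothesis g_coupling : coupling mu nu g.
Hypothesis mu_moment2 : mu.-integrable setT (fun y => (sqnorm y)%:E).
Hypothesis nu_moment2 : nu.-integrable setT (fun y => (sqnorm y)%:E).

Definition cross_moment : 'M[R]_n :=
  \matrix_(i, j) Rintegral g setT (fun z => tnth z.1 i * tnth z.2 j).

Lemma measurable_cross_entry i j :
  measurable_fun setT (fun z : vec R n * vec R n => tnth z.1 i * tnth z.2 j).
Proof.
apply: measurable_funM.
- exact: measurableT_comp (measurable_tnth i) measurable_fst.
- exact: measurableT_comp (measurable_tnth j) measurable_snd.
Qed.

Lemma integrable_cross_entry i j :
  g.-integrable setT (EFin \o fun z => tnth z.1 i * tnth z.2 j).
Proof.
have [g1 g2] := g_coupling.
have msq : measurable_fun setT (fun y : vec R n => (sqnorm y)%:E).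
  by apply/measurable_EFinP; apply: measurable_sqnorm.
have int1 := integrable_comp_pushforward measurable_fst g1 msq mu_moment2.
have int2 := integrable_comp_pushforward measurable_snd g2 msq nu_moment2.
apply: le_integrable (integrableD _ int1 int2) => //.
  by apply/measurable_EFinP; apply: measurable_cross_entry.
move=> z _ /=; rewrite lee_fin [X in _ <= X]ger0_norm ?addr_ge0 ?sqnorm_ge0//.
have x_le := sqr_tnth_le_sqnorm z.1 i; have y_le := sqr_tnth_le_sqnorm z.2 j.
apply: le_trans (lerD x_le y_le).
rewrite ler_norml; apply/andP; split; nra.
Qed.

Lemma fhat_cross_moment f : rv (fhat g f) = rv f *m cross_moment^T.
Proof.
apply/rowP => i; rewrite !mxE tnth_mktuple.
under eq_Rintegral => z _.
  rewrite (_ : _ * _ = \sum_(j < n) tnth f j * (tnth z.1 i * tnth z.2 j)); last first.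
    by rewrite /dotv mulr_sumr; apply: eq_bigr => j _; rewrite mulrA mulrC.
  over.
rewrite Rintegral_sum => [|j]; last exact/integrableZl_EFin/integrable_cross_entry.
by apply: eq_bigr => j _; rewrite RintegralZl ?integrable_cross_entry// !mxE.
Qed.

Lemma cross_moment_sub (W : 'M[R]_n) :
  {ae mu, forall x, subsp W x} -> (cross_moment^T <= W)%MS.
Proof.
move=> muW; rewrite submxE; apply/eqP/matrixP => j k; rewrite !mxE.
rewrite (eq_bigr (fun i => Rintegral g setT (fun z =>
    cokermx W i k * (tnth z.1 i * tnth z.2 j)))); last first.
  by move=> i _; rewrite !mxE RintegralZl ?integrable_cross_entry// mulrC.
rewrite -Rintegral_sum => [|i]; last exact/integrableZl_EFin/integrable_cross_entry.
apply: Rintegral_ae0.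
  by apply: measurable_sum => i; apply: measurable_funM => //; apply: measurable_cross_entry.
apply: filterS (ae_coupling_fst g_coupling muW) => z.
rewrite /subsp /= submxE => /eqP /matrixP /(_ 0 k); rewrite !mxE => z1W.
rewrite (eq_bigr (fun i => tnth z.2 j * (rv z.1 0 i * cokermx W i k))).
  by rewrite -mulr_sumr z1W mulr0.
by move=> i _; rewrite [rv _ 0 i]mxE; ring.
Qed.

Lemma fhat_cross_momentP (V : 'M[R]_n) : prob_frame V nu ->
  (forall f, {ae nu, forall z, dotv f z = dotv (fhat g f) z}) <->
  (forall u : 'rV_n, (u - u *m cross_moment^T <= perp V)%MS).
Proof.
move=> nuV; split => [rec u | compl f].
  have := (frame_ae_dotv_eqP _ _ nuV).1 (rec (vec_of_row u)).
  by rewrite fhat_cross_moment rv_vec_of_row.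
by apply/(frame_ae_dotv_eqP _ _ nuV); rewrite fhat_cross_moment; apply: compl.
Qed.

Lemma cross_moment_obl_projP (W V : 'M[R]_n) :
  (forall i j, Rintegral g setT (fun z => tnth z.1 i * tnth z.2 j) = obl_proj W V i j) <->
  cross_moment^T = proj_mx W (perp V).
Proof.
split => [moments | E i j]; last by rewrite /obl_proj -E trmxK mxE.
by rewrite -[RHS]trmxK; congr _^T; apply/matrixP => i j; rewrite mxE moments.
Qed.

End CrossMoment.

Lemma eq_proj_mxP (F : fieldType) n (U V M : 'M[F]_n) :
  (U :&: V = 0)%MS -> (U + V == 1%:M)%MS -> (M <= U)%MS ->
  (forall u : 'rV_n, (u - u *m M <= V)%MS) <-> M = proj_mx U V.
Proof.
move=> UV0 /eqmxP UV1 MU; split => [compl | ->]; last first.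
  by move=> u; apply: proj_mx_compl_sub; rewrite UV1 submx1.
apply/row_matrixP => i; rewrite !rowE; set u := delta_mx 0 i.
rewrite -[in RHS](subrK (u *m M) u) mulmxDl (proj_mx_0 UV0 (compl u)) add0r.
by rewrite (proj_mx_id UV0)//; apply: submx_trans (submxMl _ _) MU.
Qed.

Unset Implicit Arguments.
Theorem theorem4p4 (R : realType) (n : nat) (W V : 'M[R]_n)
  (mu nu : probability (vec R n) R) :
  direct_sum_perp W V ->
  prob_frame W mu -> prob_frame V nu ->
  consistent_reconstruction mu nu <-> oblique_dual W V mu nu.
Proof.
move=> [/mxdirect_addsP WV0 WV_full] muW nuV.
have [[_ mu2] _] := muW; have [[_ nu2] _] := nuV.
split=> -[g [g_cpl g_prop]]; exists g; split => //.
all: have gW := cross_moment_sub g_cpl mu2 nu2 (in_P2_ae_subsp muW.1).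
- apply/cross_moment_obl_projP/(eq_proj_mxP WV0 WV_full gW).
  exact/(fhat_cross_momentP g_cpl mu2 nu2 nuV).
- apply/(fhat_cross_momentP g_cpl mu2 nu2 nuV)/(eq_proj_mxP WV0 WV_full gW).
  exact/cross_moment_obl_projP.
Qed.
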